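(* For all integers $m\ge 0$ and $s\ge 0$, every $(m,s)$-semibipartite directed graph is not $(m+2)$-solvable.
   Context: A directed graph $D=(V,E)$ has arcs $E \subseteq \{(u,v)\in V^2 : u \neq v\}$ (bidirectional pairs allowed; an undirected graph is identified with the directed graph having both arcs for each edge). $N^-(v)=\{u:(u,v)\in E\}$. For $q\ge2$ let $[q]=\{0,\dots,q-1\}$. A $D$-function over $[q]$ is a map $f=(f_v)_{v\in V}:[q]^V\to[q]^V$ with each $f_v(x)$ depending only on $(x_u)_{u\in N^-(v)}$. $D$ is $q$-solvable if some $D$-function $f$ over $[q]$ has the property that for every $x\in[q]^V$ there is $v$ with $f_v(x)=x_v$. A directed graph $D$ is $(m,s)$-semibipartite if its vertex set can be partitioned as $V=L\cup R$ with $|L|=m$, $|R|=s$, the induced subgraph $D[L]$ has no arcs, and the induced subgraph $D[R]$ is acyclic (contains no directed cycle). *)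

From mathcomp Require Import all_boot.
Set Implicit Arguments. Unset Strict Implicit. Unset Printing Implicit Defensive.

(* A directed graph on a finite vertex set V is given by its arc relation E;
   loops are excluded (E v v = false).  N^-(v) = [set u | E u v]. *)
Definition loopless (V : finType) (E : rel V) : Prop := forall v, ~~ E v v.

Definition config (V : finType) (q : nat) := {ffun V -> 'I_q}.

Definition is_D_function (V : finType) (E : rel V) (q : nat)
  (f : V -> config V q -> 'I_q) : Prop :=
  forall (v : V) (x y : config V q),
    (forall u, E u v -> x u = y u) -> f v x = f v y.

Definition solvable (V : finType) (E : rel V) (q : nat) : Prop :=
  exists f : V -> config V q -> 'I_q,
    is_D_function E f /\ forall x : config V q, exists v : V, f v x = x v.

Definition acyclic_on (V : finType) (E : rel V) (R : {set V}) : Prop :=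
  forall c : seq V, c != [::] -> all (fun v => v \in R) c -> ~~ cycle E c.

Definition semibipartite (V : finType) (E : rel V) (m s : nat) : Prop :=
  exists L : {set V},
    [/\ #|L| = m, #|~: L| = s,
        (forall u v, u \in L -> v \in L -> ~~ E u v)
      & acyclic_on E (~: L)].

From mathcomp Require Import all_boot.

Set Implicit Arguments. Unset Strict Implicit. Unset Printing Implicit Defensive.

(* Paint every vertex of L with one colour c and the others according to a
   configuration x.  As L is independent, f_l ignores c for l in L, so the |L|
   values f_l(x) miss one of any |L| + 1 candidate colours.  The configuration
   x is built by removing a sink r of D[R] and treating the rest first: the
   values of f_r for the |L| + 1 < q candidate colours are then determined,
   some value of x_r differs from all of them, and changing x_r affects no
   other remaining vertex.  For the colour missed by L no vertex is fixed. *)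

Lemma exists_notin_card (T : finType) (A B : {set T}) :
  #|A| < #|B| -> exists2 b, b \in B & b \notin A.
Proof.
move=> ltAB; have /subsetPn[b Bb nAb] : ~~ (B \subset A).
  by apply: contraTN ltAB => /subset_leq_card; rewrite leqNgt.
by exists b.
Qed.

Lemma fcycle_traject (T : eqType) (h : T -> T) y n :
  iter n.+1 h y = y -> fcycle h (traject h y n.+1).
Proof.
by move=> hy; rewrite (cycle_path y) /= last_traject -iterS hy eqxx fpath_traject.
Qed.

Section Acyclic.
Variables (V : finType) (E : rel V) (R : {set V}).
Hypothesis acyclicR : acyclic_on E R.

Lemma acyclic_no_successor_fun (A : {set V}) (h : V -> V) :
  A \subset R -> {in A, forall v, (h v \in A) && E v (h v)} -> A = set0.
Proof.
move=> sAR succ; apply/eqP/set0Pn => -[a Aa].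
have hA : {homo h : v / v \in A} by move=> v /succ /andP[].
have /trajectP[i lt_i_o iter_o] := looping_order h a.
pose y := iter i h a.
have ycycle : iter (order h a - i) h y = y.
  by rewrite /y -iterD subnK ?(ltnW lt_i_o) // -iter_o.
have : 0 < order h a - i by rewrite subn_gt0.
case: (order h a - i) ycycle => // n ycycle _.
have allA : all (mem A) (traject h y n.+1).
  by apply/allP => _ /trajectP[j _ ->]; rewrite inE !iter_in.
move/negP: (@acyclicR (traject h y n.+1) isT (sub_all (subsetP sAR) allA)); apply.
apply: (sub_in_cycle _ allA (fcycle_traject ycycle)) => u v /succ/andP[_ Euh] _.
by move/eqP <-.
Qed.

Lemma acyclic_sink (A : {set V}) :
  A \subset R -> A != set0 -> exists2 r, r \in A & {in A, forall u, ~~ E r u}.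
Proof.
move=> sAR; case: (pickP [pred r in A | [forall u in A, ~~ E r u]]).
  by move=> r /andP[Ar /forall_inP sink_r]; exists r.
move=> no_sink; pose h v := odflt v [pick u in A | E v u].
suff -> : A = set0 by rewrite eqxx.
apply: (acyclic_no_successor_fun (h := h) sAR) => v Av.
move: (no_sink v); rewrite /= Av /= => /negbT.
rewrite negb_forall_in => /exists_inP[u Au /negPn Evu].
rewrite /h; case: pickP => [w /andP[-> ->] // | /(_ u)].
by rewrite /= Au Evu.
Qed.

End Acyclic.

Definition paint (V : finType) (q : nat) (L : {set V}) (c : 'I_q) (x : config V q)
  : config V q := [ffun v => if v \in L then c else x v].

Section DFunction.
Variables (V : finType) (E : rel V) (q : nat) (f : V -> config V q -> 'I_q).
Hypothesis f_D : is_D_function E f.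
Variable L : {set V}.

Section Independent.
Hypothesis indepL : {in L &, forall u v, ~~ E u v}.

Lemma independent_paint x c : {in L, forall l, f l (paint L c x) = f l x}.
Proof.
move=> l Ll; apply: f_D => w Ewl; rewrite ffunE; case: ifP => // Lw.
by rewrite (negbTE (indepL Lw Ll)) in Ewl.
Qed.

Lemma independent_paint_avoid x (C : {set 'I_q}) :
  #|L| < #|C| -> exists2 c, c \in C & {in L, forall l, f l (paint L c x) != c}.
Proof.
move=> ltLC; have [c Cc nSc] := exists_notin_card
  (leq_ltn_trans (leq_imset_card (f^~ x) L) ltLC).
exists c => // l Ll; rewrite independent_paint //.
by apply: contraNneq nSc => <-; apply: imset_f.
Qed.

End Independent.

Lemma acyclic_paint_avoid (C : {set 'I_q}) : #|C| < q -> acyclic_on E (~: L) ->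
  forall A : {set V}, A \subset ~: L ->
  exists x, {in A, forall r, {in C, forall c, f r (paint L c x) != x r}}.
Proof.
move=> ltCq acyR A; have [n] := ubnP #|A|; elim: n A => // n IHn A leAn sAR.
have [-> | nzA] := eqVneq A set0.
  by exists [ffun=> Ordinal (leq_ltn_trans (leq0n _) ltCq)] => r; rewrite inE.
have [r Ar sink_r] := acyclic_sink acyR sAR nzA.
have ltAr : #|A :\ r| < n by move: leAn; rewrite (cardsD1 r) Ar.
have [x avoid_x] := IHn _ ltAr (subset_trans (subD1set A r) sAR).
pose S := [set f r (paint L c x) | c in C].
have [|a _ nSa] := exists_notin_card (B := setT) (A := S).
  by rewrite cardsT card_ord (leq_ltn_trans (leq_imset_card _ _) ltCq).
pose x' : config V q := [ffun v => if v == r then a else x v].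
have f_x' : {in A, forall u c, f u (paint L c x') = f u (paint L c x)}.
  move=> u Au c; apply: f_D => w Ewu; rewrite !ffunE; case: eqP => // wr.
  by rewrite wr (negbTE (sink_r u Au)) in Ewu.
exists x' => u Au c Cc; rewrite f_x' // ffunE; have [-> | ur] := eqVneq u r.
  by apply: contraNneq nSa => <-; apply: imset_f.
by apply: avoid_x => //; rewrite !inE ur Au.
Qed.

End DFunction.

Lemma not_solvable_independent_acyclic (V : finType) (E : rel V) (q : nat)
    (L : {set V}) :
  #|L|.+1 < q -> {in L &, forall u v, ~~ E u v} -> acyclic_on E (~: L) ->
  ~ solvable E q.
Proof.
move=> ltLq indepL acyR [f [f_D fixed]].
have q_gt0 : 0 < q := ltn_trans (ltn0Sn _) ltLq.
pose C := [set~ Ordinal q_gt0].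
have cardC : #|C| = q.-1 by rewrite cardsC1 card_ord.
have [|x avoidR] := acyclic_paint_avoid f_D (C := C) _ acyR (subxx (~: L)).
  by rewrite cardC ltn_predL.
have [|c Cc avoidL] := independent_paint_avoid f_D indepL x (C := C).
  by rewrite cardC ltn_predRL.
have [v] := fixed (paint L c x); rewrite ffunE; case: ifP => [Lv | nLv] /eqP.
  by apply/negP; apply: avoidL.
by apply/negP; apply: avoidR => //; rewrite inE nLv.
Qed.

Theorem theorem10 (m s : nat) (V : finType) (E : rel V) :
  loopless E -> semibipartite E m s -> ~ solvable E (m + 2).
Proof.
move=> _ [L [<- _ indepL acyR]].
by apply: not_solvable_independent_acyclic indepL acyR; rewrite addn2.
Qed.
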